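(* In the brand-effects model, fix $k$ with $0 \le k < s$, fix the ads placed in positions $1,\dots,k$, fix the eCPM bids of the remaining (not yet placed) non-brand advertisers (at least one), and fix the eCPM bids of all remaining brand advertisers except the one with the highest eCPM bid among the remaining brand advertisers, whose eCPM bid $v_b$ is allowed to vary (over values at least as large as the other remaining brand eCPM bids). Then exactly one of the following holds: it is optimal to show a brand ad in position $k+1$ for no value of $v_b$; it is optimal for every value of $v_b$; or there is a threshold $t$ such that it is optimal to show a brand ad in position $k+1$ if and only if $v_b \ge t$.
   Context: Brand-effects model: there are $s$ positions and a set of advertisers, each either a brand advertiser or a non-brand advertiser; advertiser $i$ has quality score $q_i \ge 0$ and bid $b_i \ge 0$, and its eCPM bid is $b_i q_i$. Each position $k$ has two quality scores $\beta_k$ and $\eta_k$, both non-increasing in $k$, normalized so $\beta_1=\eta_1=1$. A brand (resp. non-brand) advertiser with quality $q$ shown in position $k$ is clicked with probability $\beta_k q$ (resp. $\eta_k q$). An allocation places distinct advertisers in the positions; its total expected welfare is $\sum_j b_{(j)} p_{(j)}$, where $b_{(j)}$ and $p_{(j)}$ are the bid and click probability of the ad in position $j$. ''It is optimal to show a brand ad in position $k+1$'' means that the maximum total expected welfare over allocations that agree with the fixed ads in positions $1,\dots,k$ and have a brand ad in position $k+1$ is at least the maximum over such allocations having a non-brand ad in position $k+1$. *)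

From HB Require Import structures.
From mathcomp Require Import all_boot all_order all_algebra.
From mathcomp Require Import reals.
Set Implicit Arguments. Unset Strict Implicit. Unset Printing Implicit Defensive.
Import Order.TTheory GRing.Theory Num.Theory.
Local Open Scope ring_scope.

(* Positions are 1..s; an allocation is a finite function
   al : {ffun 'I_s -> option A}, where index i : 'I_s stands for position
   i+1 and None means the position is left empty.  Position quality scores
   beta, eta : nat -> R are indexed by the (1-based) position number. *)

Section BrandModel.
Variables (R : realType) (A : finType) (s : nat).
Implicit Types (al : {ffun 'I_s -> option A}).

Definition valid_alloc al : Prop :=
  forall (i j : 'I_s) (a : A), al i = Some a -> al j = Some a -> i = j.

Definition agrees (k : nat) (pre al : {ffun 'I_s -> option A}) : Prop :=
  forall i : 'I_s, (i < k)%N -> al i = pre i.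

Definition remaining (k : nat) (pre : {ffun 'I_s -> option A}) (a : A) : Prop :=
  forall i : 'I_s, (i < k)%N -> pre i <> Some a.

Definition click_prob (brand : pred A) (beta eta : nat -> R) (q : A -> R)
  (a : A) (j : nat) : R :=
  (if brand a then beta j else eta j) * q a.

Definition welfare (brand : pred A) (beta eta : nat -> R) (b q : A -> R) al : R :=
  \sum_(i < s) match al i with
               | Some a => b a * click_prob brand beta eta q a i.+1
               | None => 0
               end.

Definition brand_at (brand : pred A) (k : nat) al : Prop :=
  exists i : 'I_s, val i = k /\ exists a, al i = Some a /\ brand a.
Definition nonbrand_at (brand : pred A) (k : nat) al : Prop :=
  exists i : 'I_s, val i = k /\ exists a, al i = Some a /\ ~~ brand a.

(* "it is optimal to show a brand ad in position k+1": the maximum welfare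
   over valid allocations agreeing with [pre] on positions 1..k with a brand
   ad in position k+1 is at least the maximum over those with a non-brand
   ad in position k+1 (the maximum of the first, finite, family is attained
   by some allocation [al]). *)
Definition brand_optimal (brand : pred A) (beta eta : nat -> R) (b q : A -> R)
  (k : nat) (pre : {ffun 'I_s -> option A}) : Prop :=
  exists al, [/\ valid_alloc al, agrees k pre al, brand_at brand k al &
    forall al', valid_alloc al' -> agrees k pre al' -> nonbrand_at brand k al' ->
      welfare brand beta eta b q al' <= welfare brand beta eta b q al].

End BrandModel.

From HB Require Import structures.
From mathcomp Require Import all_boot all_order all_algebra.
From mathcomp Require Import reals ring lra.
From Stdlib Require Import Classical.
Set Implicit Arguments. Unset Strict Implicit.
Import Order.TTheory GRing.Theory Num.Theory.
Local Open Scope ring_scope.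

(* Writing v for the eCPM bid of the top remaining brand advertiser a0, every
   admissible brand-first allocation can be improved by putting a0 in position
   k+1 (swap it up, or replace the brand ad there), so optimality of a brand
   ad is optimality of some allocation with a0 in position k+1.  The welfare of
   an allocation is affine in v, with slope the brand quality of a0's slot; it
   is beta_(k+1) when a0 is in position k+1 and at most beta_(k+1) for any
   allocation with a non-brand ad there.  So each comparison "al' <= al" holds
   on an upward ray of v, and upward rays (including the empty and the full
   set) are closed under the finite conjunctions and disjunctions that define
   optimality. *)

Section UpwardRays.
Variable R : realFieldType.

Definition upray (S : R -> Prop) :=
  (forall v, ~ S v) \/ (forall v, S v) \/ exists t, forall v, S v <-> t <= v.

Lemma upray_ext (S S' : R -> Prop) : (forall v, S v <-> S' v) -> upray S -> upray S'.
Proof.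
move=> e [h|[h|[t h]]]; [left|right; left|right; right].
- by move=> v /e; apply: h.
- by move=> v; apply/e.
- by exists t => v; rewrite -e.
Qed.

Lemma upray_const (P : Prop) : upray (fun _ => P).
Proof. by case: (classic P) => p; [right; left | left]. Qed.

Lemma upray_and S1 S2 : upray S1 -> upray S2 -> upray (fun v => S1 v /\ S2 v).
Proof.
move=> [h1|[h1|[t1 h1]]].
- by move=> _; left=> v [/h1].
- by apply: upray_ext => v; split=> [?|[]] //; split => //; apply: h1.
move=> [h2|[h2|[t2 h2]]].
- by left=> v [_ /h2].
- by right; right; exists t1 => v; split=> [[/h1]|/h1] //.
right; right; exists (Order.max t1 t2) => v; rewrite ge_max h1 h2.
by split=> [[-> ->]|/andP].
Qed.

Lemma upray_or S1 S2 : upray S1 -> upray S2 -> upray (fun v => S1 v \/ S2 v).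
Proof.
move=> [h1|[h1|[t1 h1]]].
- by apply: upray_ext => v; split=> [|[/h1 []|//]]; right.
- by move=> _; right; left => v; left.
move=> [h2|[h2|[t2 h2]]].
- by right; right; exists t1 => v; split=> [[/h1|/h2]|/h1] //; left.
- by right; left => v; right.
right; right; exists (Order.min t1 t2) => v; rewrite ge_min h1 h2.
by split=> [[->|->]|/orP] //; rewrite orbT.
Qed.

Lemma upray_impl (P : Prop) S : (P -> upray S) -> upray (fun v => P -> S v).
Proof.
case: (classic P) => p h; last by right; left.
by apply: upray_ext (h p) => v; split => // H; apply: H.
Qed.

Lemma upray_andl (P : Prop) S : (P -> upray S) -> upray (fun v => P /\ S v).
Proof.
case: (classic P) => p h; last by left => v [].
by apply: upray_ext (h p) => v; split => // -[].
Qed.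

Lemma upray_affine_le (a b c d : R) : c <= d -> upray (fun v => a + v * c <= b + v * d).
Proof.
rewrite le_eqVlt => /orP [/eqP <-|cd].
  by apply: upray_ext (upray_const (a <= b)) => v; rewrite lerD2r.
right; right; exists ((a - b) / (d - c)) => v.
rewrite ler_pdivrMr ?subr_gt0 // mulrBr.
by split => h; lra.
Qed.

Lemma upray_all_seq (T : eqType) (l : seq T) (S : T -> R -> Prop) :
  (forall x, upray (S x)) -> upray (fun v => forall x, x \in l -> S x v).
Proof.
move=> h; elim: l => [|y l IH]; first by right; left.
apply: upray_ext (upray_and (h y) IH) => v; split.
  by move=> [h1 h2] x; rewrite inE => /orP [/eqP ->|/h2].
by move=> H; split=> [|x xl]; apply: H; rewrite inE ?eqxx ?xl ?orbT.
Qed.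

Lemma upray_has_seq (T : eqType) (l : seq T) (S : T -> R -> Prop) :
  (forall x, upray (S x)) -> upray (fun v => exists2 x, x \in l & S x v).
Proof.
move=> h; elim: l => [|y l IH]; first by left => v [].
apply: upray_ext (upray_or (h y) IH) => v; split.
  move=> [H|[x xl H]]; first by exists y; rewrite ?inE ?eqxx.
  by exists x; rewrite ?inE ?xl ?orbT.
move=> [x]; rewrite inE => /orP [/eqP -> H|xl H]; first by left.
by right; exists x.
Qed.

Lemma upray_forall (T : finType) (S : T -> R -> Prop) :
  (forall x, upray (S x)) -> upray (fun v => forall x, S x v).
Proof.
move/(upray_all_seq (enum T)); apply: upray_ext => v.
by split=> H x => [|_]; apply: H; rewrite ?mem_enum.
Qed.

Lemma upray_exists (T : finType) (S : T -> R -> Prop) :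
  (forall x, upray (S x)) -> upray (fun v => exists x, S x v).
Proof.
move/(upray_has_seq (enum T)); apply: upray_ext => v.
by split=> [[x _ H]|[x H]]; exists x; rewrite ?mem_enum.
Qed.

Lemma upray_trichotomy (D S S' : R -> Prop) (w : R) :
  D w -> (forall v u, D v -> v <= u -> D u) ->
  upray S' -> (forall v, D v -> S v <-> S' v) ->
  let P1 := forall v, D v -> ~ S v in
  let P2 := forall v, D v -> S v in
  let P3 := exists t, (exists v, D v /\ ~ S v) /\
                      (forall v, D v -> (S v <-> t <= v)) in
  [/\ P1 \/ P2 \/ P3, ~ (P1 /\ P2), ~ (P1 /\ P3) & ~ (P2 /\ P3)].
Proof.
move=> Dw Dup hS' SE P1 P2 P3; split.
- case: hS' => [h|[h|[t h]]].
  + by left => v Dv /(SE v Dv) /h.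
  + by right; left => v Dv; apply/(SE v Dv).
  case: (classic (exists v, D v /\ v < t)) => [[v [Dv vt]]|nex].
    right; right; exists t; split => [|u Du]; last by rewrite SE // h.
    by exists v; split => // /(SE v Dv) /h; rewrite leNgt vt.
  right; left => v Dv; apply/(SE v Dv)/h.
  by rewrite leNgt; apply/negP => vt; apply: nex; exists v.
- by move=> [h1 h2]; exact: h1 w Dw (h2 w Dw).
- move=> [h1 [t [_ h3]]].
  have Du : D (Order.max w t) by apply: Dup Dw _; rewrite le_max lexx.
  by apply: (h1 _ Du); apply/(h3 _ Du); rewrite le_max lexx orbT.
- by move=> [h2 [t [[v [Dv nv]] _]]]; apply: nv; apply: h2.
Qed.

End UpwardRays.

Section BrandThreshold.
Variables (R : realType) (A : finType) (s k : nat)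
  (beta eta : nat -> R) (brand : pred A) (b q : A -> R)
  (pre : {ffun 'I_s -> option A}) (a0 : A).
Implicit Types (al : {ffun 'I_s -> option A}) (v : R).
Hypotheses (k_lt_s : (k < s)%N)
  (beta_antitone : forall i j : nat, (1 <= i)%N -> (i <= j)%N -> (j <= s)%N ->
     beta j <= beta i)
  (beta_ge0 : forall j : nat, (1 <= j)%N -> (j <= s)%N -> 0 <= beta j)
  (brand_a0 : brand a0) (remaining_a0 : remaining k pre a0) (q_a0_gt0 : 0 < q a0).

(* Bids in which a0 has eCPM bid v. *)
Definition bids v a := if a == a0 then v / q a0 else b a.

Definition welfare_at v al := welfare brand beta eta (bids v) q al.

Definition slot_welfare v (o : option A) (j : nat) :=
  match o with Some a => bids v a * click_prob brand beta eta q a j | None => 0 end.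

Definition a0_slot_beta al :=
  \sum_(i < s) (if al i == Some a0 then beta i.+1 else 0).

Definition pos_k : 'I_s := Ordinal k_lt_s.

Definition admissible v := 0 <= v /\
  (forall a : A, remaining k pre a -> brand a -> a != a0 -> b a * q a <= v).

Lemma slot_welfare_a0 v j : slot_welfare v (Some a0) j = v * beta j.
Proof.
by rewrite /slot_welfare /bids /click_prob eqxx brand_a0; field; rewrite gt_eqF.
Qed.

Lemma slot_welfare_brand v x j :
  x != a0 -> brand x -> slot_welfare v (Some x) j = b x * q x * beta j.
Proof. by move=> /negPf xa bx; rewrite /slot_welfare /bids /click_prob xa bx; ring. Qed.

Lemma slot_welfare_affine v o j :
  slot_welfare v o j = slot_welfare 0 o j + v * (if o == Some a0 then beta j else 0).
Proof.
case: o => [a|]; last by rewrite /= mulr0 addr0.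
have [->|ne] := eqVneq a a0; first by rewrite !slot_welfare_a0 eqxx mul0r add0r.
have -> : (Some a == Some a0) = false by apply/eqP => -[] /eqP; apply/negP.
by rewrite /slot_welfare /bids (negPf ne) mulr0 addr0.
Qed.

Lemma welfare_affine v al : welfare_at v al = welfare_at 0 al + v * a0_slot_beta al.
Proof.
rewrite /welfare_at /welfare /a0_slot_beta mulr_sumr -big_split /=.
by apply: eq_bigr => i _; exact: (slot_welfare_affine v (al i) i.+1).
Qed.

Lemma a0_slot_beta_at al (j : 'I_s) :
  valid_alloc al -> al j = Some a0 -> a0_slot_beta al = beta j.+1.
Proof.
move=> hv hj; rewrite /a0_slot_beta (bigD1 j) //= hj eqxx big1 ?addr0 // => i /negPf hij.
by case: eqP => // e; rewrite (hv _ _ _ e hj) eqxx in hij.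
Qed.

Lemma a0_slot_beta_absent al : (forall j, al j <> Some a0) -> a0_slot_beta al = 0.
Proof. by move=> h; rewrite /a0_slot_beta big1 // => i _; case: eqP => // /h. Qed.

Lemma a0_not_before_k al (j : 'I_s) :
  agrees k pre al -> al j = Some a0 -> (k <= j)%N.
Proof.
by move=> ha hj; rewrite leqNgt; apply/negP => jk; apply: (remaining_a0 jk); rewrite -ha.
Qed.

Lemma a0_slot_beta_nonbrand al :
  valid_alloc al -> agrees k pre al -> nonbrand_at brand k al ->
  a0_slot_beta al <= beta k.+1.
Proof.
move=> hv ha [i [ik [a [hia hna]]]].
case: (pickP (fun j => al j == Some a0)) => [j /eqP hj|none]; last first.
  rewrite a0_slot_beta_absent => [|j /eqP]; [exact: beta_ge0 | by rewrite none].
rewrite (a0_slot_beta_at hv hj).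
move: (a0_not_before_k ha hj); rewrite leq_eqVlt => /orP [/eqP kj|jk].
  have ij : i = j by apply: val_inj; rewrite /= ik kj.
  by move: hia; rewrite ij hj => -[e]; rewrite -e brand_a0 in hna.
by apply: beta_antitone; rewrite ?ltn_ord // ltnW.
Qed.

Lemma bigD2 (F : 'I_s -> R) i j : i != j ->
  \sum_(l < s) F l = F i + F j + \sum_(l < s | (l != i) && (l != j)) F l.
Proof. by move=> ij; rewrite (bigD1 i) //= (bigD1 j) ?addrA // eq_sym. Qed.

Lemma swap_a0_up v al x (j : 'I_s) :
  valid_alloc al -> agrees k pre al -> al pos_k = Some x -> brand x -> x != a0 ->
  b x * q x <= v -> al j = Some a0 -> (k < j)%N ->
  exists al', [/\ valid_alloc al', agrees k pre al', al' pos_k = Some a0 &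
                  welfare_at v al <= welfare_at v al'].
Proof.
move=> hv ha hx bx xa bxv hj kj.
have jk : j != pos_k by apply/eqP => e; rewrite e ltnn in kj.
pose f := fun i : 'I_s => if i == pos_k then j else if i == j then pos_k else i.
have fK : involutive f by move=> i; rewrite /f; do !case: eqP => //; congruence.
exists [ffun i => al (f i)]; split.
- move=> i1 i2 a; rewrite !ffunE => e1 e2.
  by rewrite -(fK i1) -(fK i2) (hv _ _ _ e1 e2).
- move=> i ik; rewrite ffunE /f.
  have -> : (i == pos_k) = false by apply/negP => /eqP e; rewrite e ltnn in ik.
  have -> : (i == j) = false by apply/negP => /eqP e; rewrite -e ltnNge ltnW in kj.
  exact: ha.
- by rewrite ffunE /f eqxx.
have kj' : pos_k != j by rewrite eq_sym.
rewrite /welfare_at /welfare !(bigD2 _ kj') !ffunE /f eqxx (negPf jk) eqxx.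
set rest := (X in _ + _ + X <= _); set rest' := (X in _ <= _ + _ + X).
have -> : rest' = rest.
  by apply: eq_bigr => i /andP [i1 i2]; rewrite ffunE /f (negPf i1) (negPf i2).
rewrite hx hj.
change (slot_welfare v (Some x) k.+1 + slot_welfare v (Some a0) j.+1 + rest <=
        slot_welfare v (Some a0) k.+1 + slot_welfare v (Some x) j.+1 + rest).
rewrite !slot_welfare_a0 !slot_welfare_brand // lerD2r.
(* exchange argument: (v - b x q x)(beta_(k+1) - beta_(j+1)) >= 0 *)
have hb : beta j.+1 <= beta k.+1 by apply: beta_antitone; rewrite ?ltn_ord // ltnW.
have := @mulr_ge0 _ (v - b x * q x) (beta k.+1 - beta j.+1).
rewrite !subr_ge0 => /(_ bxv hb).
move: (b x * q x) => y h; nra.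
Qed.

Lemma place_a0 v al x :
  valid_alloc al -> agrees k pre al -> al pos_k = Some x -> brand x -> x != a0 ->
  b x * q x <= v -> (forall j, al j <> Some a0) ->
  exists al', [/\ valid_alloc al', agrees k pre al', al' pos_k = Some a0 &
                  welfare_at v al <= welfare_at v al'].
Proof.
move=> hv ha hx bx xa bxv absent.
exists [ffun i => if i == pos_k then Some a0 else al i]; split.
- move=> i1 i2 a; rewrite !ffunE.
  case: (i1 =P pos_k) => [->|n1]; case: (i2 =P pos_k) => [->|n2] //.
  + by move=> <- /absent.
  + by move=> /[swap] <- /absent.
  + exact: hv.
- move=> i ik; rewrite ffunE.
  have -> : (i == pos_k) = false by apply/negP => /eqP e; rewrite e ltnn in ik.
  exact: ha.
- by rewrite ffunE eqxx.
rewrite /welfare_at /welfare (bigD1 pos_k) //= [X in _ <= X](bigD1 pos_k) //= !ffunE eqxx.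
set rest := (X in _ + X <= _); set rest' := (X in _ <= _ + X).
have -> : rest' = rest by apply: eq_bigr => i i1; rewrite ffunE (negPf i1).
rewrite hx.
change (slot_welfare v (Some x) k.+1 + rest <= slot_welfare v (Some a0) k.+1 + rest).
by rewrite slot_welfare_a0 slot_welfare_brand // lerD2r ler_wpM2r //; exact: beta_ge0.
Qed.

Lemma brand_at_improve v al :
  admissible v -> valid_alloc al -> agrees k pre al -> brand_at brand k al ->
  exists al', [/\ valid_alloc al', agrees k pre al', al' pos_k = Some a0 &
                  welfare_at v al <= welfare_at v al'].
Proof.
move=> [_ hD] hv ha [i [ik [x [hix bx]]]].
have ik' : i = pos_k by apply: val_inj.
subst i; have [xa|xa] := eqVneq x a0; first by exists al; split; rewrite // hix xa.
have rx : remaining k pre x.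
  move=> i' ik' e; have := ha i' ik'; rewrite e => e'.
  by have := hv _ _ _ e' hix => iK; rewrite iK ltnn in ik'.
have bxv := hD x rx bx xa.
case: (pickP (fun j => al j == Some a0)) => [j /eqP hj|none]; last first.
  by apply: (place_a0 hv ha hix) => // j /eqP; rewrite none.
apply: (swap_a0_up hv ha hix bx xa bxv hj).
move: (a0_not_before_k ha hj); rewrite leq_eqVlt => /orP [/eqP kj|//].
have jk : j = pos_k by apply: val_inj.
by move: hj; rewrite jk hix => -[] e; rewrite e eqxx in xa.
Qed.

Definition a0_first al := [/\ valid_alloc al, agrees k pre al & al pos_k = Some a0].
Definition nonbrand_first al :=
  [/\ valid_alloc al, agrees k pre al & nonbrand_at brand k al].

Definition a0_first_optimal v := exists al, a0_first al /\
  forall al', nonbrand_first al' -> welfare_at v al' <= welfare_at v al.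

Lemma brand_optimalE v :
  admissible v -> brand_optimal brand beta eta (bids v) q k pre <-> a0_first_optimal v.
Proof.
move=> Dv; split.
  move=> [al [hv ha hbr hmax]].
  have [al' [hv' ha' hk' hle]] := brand_at_improve Dv hv ha hbr.
  exists al'; split => [|al'' [h1 h2 h3]]; first by split.
  exact: le_trans (hmax _ h1 h2 h3) hle.
move=> [al [[hv ha hk] hmax]]; exists al; split => //.
  by exists pos_k; split => //; exists a0.
by move=> al' h1 h2 h3; apply: hmax.
Qed.

Lemma upray_a0_first_optimal : upray a0_first_optimal.
Proof.
apply: upray_exists => al; apply: upray_andl => -[hv ha hk].
apply: upray_forall => al'; apply: upray_impl => -[h1 h2 h3].
have := upray_affine_le (welfare_at 0 al') (welfare_at 0 al)
  (a0_slot_beta_nonbrand h1 h2 h3).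
rewrite -(a0_slot_beta_at hv hk); apply: upray_ext => v.
by rewrite (welfare_affine v al') (welfare_affine v al).
Qed.

Lemma admissible_up v u : admissible v -> v <= u -> admissible u.
Proof.
move=> [v0 hv] vu; split; first exact: le_trans v0 vu.
by move=> a r br na; apply: le_trans (hv a r br na) vu.
Qed.

Lemma admissible_sum (hbq : forall a, 0 <= b a * q a) :
  admissible (\sum_(a : A) b a * q a).
Proof.
split; first exact: sumr_ge0.
by move=> a _ _ _; rewrite (bigD1 a) //= lerDl sumr_ge0.
Qed.

End BrandThreshold.

Theorem theorem5 (R : realType) (A : finType) (s k : nat)
  (beta eta : nat -> R) (brand : pred A) (b q : A -> R)
  (pre : {ffun 'I_s -> option A}) (a0 : A) :
  (k < s)%N ->
  beta 1%N = 1 -> eta 1%N = 1 ->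
  (forall i j : nat, (1 <= i)%N -> (i <= j)%N -> (j <= s)%N ->
     beta j <= beta i /\ eta j <= eta i) ->
  (forall j : nat, (1 <= j)%N -> (j <= s)%N -> 0 <= beta j /\ 0 <= eta j) ->
  (forall a : A, 0 <= b a /\ 0 <= q a <= 1) ->
  valid_alloc pre ->
  (exists a : A, remaining k pre a /\ ~~ brand a) ->
  brand a0 -> remaining k pre a0 -> 0 < q a0 ->
  let D := fun v : R => 0 <= v /\
     (forall a : A, remaining k pre a -> brand a -> a != a0 -> b a * q a <= v) in
  let bv := fun (v : R) (a : A) => if a == a0 then v / q a0 else b a in
  let opt := fun v : R => brand_optimal brand beta eta (bv v) q k pre in
  let P1 := forall v, D v -> ~ opt v in
  let P2 := forall v, D v -> opt v in
  let P3 := exists t : R, (exists v, D v /\ ~ opt v) /\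
                          (forall v, D v -> (opt v <-> t <= v)) in
  [/\ P1 \/ P2 \/ P3, ~ (P1 /\ P2), ~ (P1 /\ P3) & ~ (P2 /\ P3)].
Proof.
move=> k_lt_s _ _ mono nneg hbq _ _ brand_a0 rem_a0 q_a0_gt0.
have beta_antitone i j hi hij hj := (mono i j hi hij hj).1.
have beta_ge0 j hj1 hjs := (nneg j hj1 hjs).1.
have bq_ge0 a : 0 <= b a * q a by case: (hbq a) => ? /andP[? _]; apply: mulr_ge0.
have hopt := upray_a0_first_optimal eta b k_lt_s beta_antitone beta_ge0
  brand_a0 rem_a0 q_a0_gt0.
have optE v := brand_optimalE (b := b) eta k_lt_s beta_antitone beta_ge0
  brand_a0 rem_a0 q_a0_gt0 (v := v).
exact: upray_trichotomy (admissible_sum k brand pre a0 bq_ge0)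
  (@admissible_up _ _ _ _ _ _ _ _ _) hopt optE.
Qed.
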